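(* For every ranking $R\in\mathcal{R}$ there exists a matrix $W\in\mathbb{R}^{m\times n}_{\ge0}$ such that for every ranking $R'\in\mathcal{R}$ with $R'\ne R$, $\langle R',W\rangle\le\langle R,W\rangle\cdot(1-\frac1n)$.
   Context: $\mathcal{R}$ is the set of rankings: matrices $R\in\{0,1\}^{m\times n}$ with $\sum_{j=1}^n R_{ij}\le 1$ for every item $i\in[m]$ and $\sum_{i=1}^m R_{ij}=1$ for every position $j\in[n]$; $\langle R,W\rangle=\sum_{i,j}R_{ij}W_{ij}$. *)

From mathcomp Require Import all_boot all_order all_algebra.
From mathcomp Require Import reals.
Set Implicit Arguments. Unset Strict Implicit. Unset Printing Implicit Defensive.
Import Order.TTheory GRing.Theory Num.Theory.
Local Open Scope ring_scope.

(* A ranking: a 0/1 matrix with each item (row) in at most one position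
   and each position (column) filled by exactly one item. *)
Definition is_ranking (R : realType) (m n : nat) (A : 'M[R]_(m, n)) : Prop :=
  [/\ (forall i j, A i j = 0 \/ A i j = 1),
      (forall i : 'I_m, \sum_(j < n) A i j <= 1) &
      (forall j : 'I_n, \sum_(i < m) A i j = 1)].

Definition frob (R : realType) (m n : nat) (A W : 'M[R]_(m, n)) : R :=
  \sum_(i < m) \sum_(j < n) A i j * W i j.

From mathcomp Require Import all_boot all_order all_algebra.
From mathcomp Require Import reals.
Set Implicit Arguments. Unset Strict Implicit. Unset Printing Implicit Defensive.
Import Order.TTheory GRing.Theory Num.Theory.
Local Open Scope ring_scope.

(* Take W := R itself.  Every column of a ranking is a unit vector, so
   <R', R> counts the positions on which R' and R place the same item.
   Hence <R, R> = n, while R' <> R disagrees on some position and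
   <R', R> <= n - 1 = n (1 - 1/n). *)

Lemma sumr_le1_except (R : numDomainType) (n : nat) (F : 'I_n -> R) (j0 : 'I_n) :
  (forall j, F j <= 1) -> F j0 <= 0 -> \sum_(j < n) F j <= n%:R - 1.
Proof.
move=> F_le1 Fj0_le0.
have -> : n%:R = \sum_(j < n) (1 : R) by rewrite sumr_const card_ord.
rewrite (bigD1 j0) //= [\sum_(j < n) 1](bigD1 j0) //= [1 + _]addrC addrK.
by rewrite -[X in _ <= X]add0r lerD // ler_sum.
Qed.

Lemma sum_delta_mul (R : pzSemiRingType) (m : nat) (a b : 'I_m) :
  \sum_(k < m) (k == a)%:R * (k == b)%:R = (a == b)%:R :> R.
Proof.
rewrite (bigD1 a) //= eqxx mul1r big1 ?addr0 // => k /negPf ->.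
by rewrite mul0r.
Qed.

Lemma matrix_neq_entry (T : eqType) (m n : nat) (A B : 'M[T]_(m, n)) :
  A <> B -> exists i j, A i j != B i j.
Proof.
move=> neqAB; case/boolP: [forall i, forall j, A i j == B i j].
  by move=> /'forall_'forall_eqP eqAB; case: neqAB; apply/matrixP.
rewrite negb_forall => /existsP [i]; rewrite negb_forall => /existsP [j].
by exists i, j.
Qed.

Section Rankings.

Variables (R : realType) (m n : nat).
Implicit Types A B : 'M[R]_(m, n).

Lemma ranking_ge0 A : is_ranking A -> forall i j, 0 <= A i j.
Proof. by case=> A01 _ _ i j; have [->|->] := A01 i j. Qed.

Lemma ranking_colP A :
  is_ranking A -> forall j, exists i, forall k, A k j = (k == i)%:R.
Proof.
move=> rankA j; have [A01 _ colA] := rankA.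
have [i /eqP Aij|A_neq1] := pickP (fun i => A i j == 1); last first.
  suff : \sum_(i < m) A i j = 0 by rewrite colA => /eqP; rewrite oner_eq0.
  apply: big1 => i _; have [//|Aij] := A01 i j.
  by move: (A_neq1 i); rewrite /= Aij eqxx.
exists i => k; have [->|neq_ki] := eqVneq k i; first exact: Aij.
have : \sum_(k < m | k != i) A k j = 0.
  by move: (colA j); rewrite (bigD1 i) //= Aij -[RHS]addr0 => /addrI.
by move/psumr_eq0P => ->// k' _; apply: ranking_ge0.
Qed.

Lemma ranking_col_dot_le1 A B j :
  is_ranking A -> is_ranking B -> \sum_(i < m) A i j * B i j <= 1.
Proof.
move=> /ranking_colP /(_ j) [a colA] /ranking_colP /(_ j) [b colB].
under eq_bigr do rewrite colA colB.
by rewrite sum_delta_mul lern1 leq_b1.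
Qed.

Lemma ranking_col_dot_eq0 A B i j :
  is_ranking A -> is_ranking B -> A i j != B i j ->
  \sum_(k < m) A k j * B k j = 0.
Proof.
move=> /ranking_colP /(_ j) [a colA] /ranking_colP /(_ j) [b colB].
rewrite colA colB => neq_ab; under eq_bigr do rewrite colA colB.
rewrite sum_delta_mul; have [eq_ab|//] := eqVneq a b.
by rewrite eq_ab eqxx in neq_ab.
Qed.

Lemma frob_ranking_self A : is_ranking A -> frob A A = n%:R.
Proof.
move=> rankA; have -> : n%:R = \sum_(j < n) (1 : R) by rewrite sumr_const card_ord.
rewrite /frob exchange_big /=.
apply: eq_bigr => j _; have /ranking_colP /(_ j) [a colA] := rankA.
by under eq_bigr do rewrite colA; rewrite sum_delta_mul eqxx.
Qed.

Lemma frob_ranking_neq A B :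
  is_ranking A -> is_ranking B -> B <> A -> frob B A <= n%:R - 1.
Proof.
move=> rankA rankB /matrix_neq_entry [i [j neqBA]].
rewrite /frob exchange_big /=; apply: (sumr_le1_except (j0 := j)).
  by move=> j'; apply: ranking_col_dot_le1.
by rewrite (ranking_col_dot_eq0 rankB rankA neqBA).
Qed.

End Rankings.

Theorem lemma7p3 (R : realType) (m n : nat) (Rk : 'M[R]_(m, n)) :
  is_ranking Rk ->
  exists W : 'M[R]_(m, n),
    (forall i j, 0 <= W i j) /\
    (forall Rk' : 'M[R]_(m, n), is_ranking Rk' -> Rk' <> Rk ->
       frob Rk' W <= frob Rk W * (1 - n%:R^-1)).
Proof.
move=> rankRk; exists Rk; split; first exact: ranking_ge0.
move=> Rk' rankRk' neq_Rk'; have [_ [j _]] := matrix_neq_entry neq_Rk'.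
have n_gt0 : (0 < n)%N := leq_ltn_trans (leq0n j) (ltn_ord j).
rewrite frob_ranking_self // mulrBr mulr1 mulfV ?pnatr_eq0 -?lt0n //.
exact: frob_ranking_neq.
Qed.
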